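(* Let $k$ be a field, let $1\le d_0\le\cdots\le d_n$ be integers with $n\ge 1$, and let $S=k[x_0,\dots,x_n]$ be $\mathbb Z$-graded with $\deg(x_i)=d_i$ and homogeneous maximal ideal $\mathfrak m$. Let $X$ be a closed subvariety of the weighted projective space $\operatorname{Proj}(S)$ with (saturated) defining ideal $I_X\subseteq S$. If $S/I_X$ has Koszul regularity $r$, then $I_X$ is generated in degrees $<r+w^2$, where $w^2=d_{n-1}+d_n$.
   Context: Notation: for $0\le i\le n+1$, $w^i=\sum_{j=n-i+1}^n d_j$ is the sum of the $i$ largest degrees, with $w^0=0$ and $w^{-1}=-1$. A graded $S$-module $M$ is Koszul $r$-regular if the local cohomology satisfies $H^i_{\mathfrak m}(M)_d=0$ for all $i\ge 0$ and all $d\ge r-w^{i-1}$; the Koszul regularity of $M$ is the minimal $r$ such that $M$ is Koszul $r$-regular. *)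

From HB Require Import structures.
From mathcomp Require Import all_boot all_order all_algebra.
From mathcomp Require Import mpoly.
Set Implicit Arguments. Unset Strict Implicit. Unset Printing Implicit Defensive.
Import Order.TTheory GRing.Theory Num.Theory.
Local Open Scope ring_scope.

Section Defs.
Variables (k : fieldType) (n : nat) (d : 'I_n.+1 -> nat).
Notation S := {mpoly k[n.+1]}.

Definition wdeg (m : 'X_{1..n.+1}) : nat := (\sum_(i < n.+1) m i * d i)%N.

(* f is homogeneous of (weighted) degree e (0 is homogeneous of every degree) *)
Definition whomog (e : int) (f : S) : Prop :=
  forall m, m \in msupp f -> (wdeg m)%:Z = e.

Definition wcomp (e : int) (f : S) : S :=
  \sum_(m <- msupp f | (wdeg m)%:Z == e) f@_m *: 'X_[m].

Definition is_ideal (I : S -> Prop) : Prop :=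
  [/\ I 0, (forall f g, I f -> I g -> I (f + g)) & (forall f g, I g -> I (f * g))].

Definition is_prime_ideal (I : S -> Prop) : Prop :=
  [/\ is_ideal I, ~ I 1 & (forall f g, I (f * g) -> I f \/ I g)].

Definition homogeneous_ideal (I : S -> Prop) : Prop :=
  is_ideal I /\ forall f e, I f -> I (wcomp e f).

(* saturation w.r.t. m = (x_0,...,x_n): (I : m^oo) = I, m^N being generated
   by the monomials of total degree N *)
Definition saturated (I : S -> Prop) : Prop :=
  forall f : S, (exists N : nat, forall m : 'X_{1..n.+1}, mdeg m = N -> I ('X_[m] * f)) -> I f.

Definition xpow (J : {set 'I_n.+1}) (N : nat) : S := \prod_(j in J) 'X_j ^+ N.
Definition wset (J : {set 'I_n.+1}) : nat := (\sum_(j in J) d j)%N.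

Definition csign (j : 'I_n.+1) (K : {set 'I_n.+1}) : S :=
  (-1) ^+ #|[set i in K | (i < j)%N]|.

(* Cech complex of M = S/I w.r.t. x_0..x_n: C^p = (+)_{|J| = p} M_{x_J}.
   A homogeneous cochain of degree e in C^p is written with a common
   exponent N as the family (f_J / x_J^N)_{|J|=p}, f_J homogeneous of degree
   e + N * deg(x_J).  In M_{x_J}, g / x_J^N = 0 iff x_J^m g \in I for some m. *)
Definition cech_cochain (p : nat) (e : int) (N : nat) (f : {set 'I_n.+1} -> S) : Prop :=
  forall J : {set 'I_n.+1}, #|J| = p -> whomog (e + (N * wset J)%N%:Z) (f J).

Definition cech_cocycle (I : S -> Prop) (p : nat) (N : nat) (f : {set 'I_n.+1} -> S) : Prop :=
  forall K : {set 'I_n.+1}, #|K| = p.+1 ->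
    exists m : nat, I (xpow K m * \sum_(j in K) csign j K * f (K :\ j) * 'X_j ^+ N).

Definition cech_coboundary (I : S -> Prop) (p : nat) (e : int) (N : nat)
    (f : {set 'I_n.+1} -> S) : Prop :=
  exists (N' : nat) (g : {set 'I_n.+1} -> S),
    (forall L : {set 'I_n.+1}, #|L|.+1 = p -> whomog (e + (N' * wset L)%N%:Z) (g L)) /\
    forall J : {set 'I_n.+1}, #|J| = p ->
      exists m : nat, I (xpow J m *
        (xpow J N' * f J - xpow J N * \sum_(j in J) csign j J * g (J :\ j) * 'X_j ^+ N')).

(* H^p_m(S/I)_e = 0, computed by the Cech complex *)
Definition loccoh_vanish (I : S -> Prop) (p : nat) (e : int) : Prop :=
  forall (N : nat) (f : {set 'I_n.+1} -> S),
    cech_cochain p e N f -> cech_cocycle I p N f -> cech_coboundary I p e N f.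

(* w^i = sum of the i largest degrees d_{n-i+1} + ... + d_n *)
Definition wtop (i : nat) : nat := (\sum_(j < n.+1 | (n.+1 - i <= j)%N) d j)%N.

(* w^{p-1}, with w^{-1} = -1 *)
Definition wprev (p : nat) : int := if p is p'.+1 then (wtop p')%:Z else -1.

Definition koszul_regular (I : S -> Prop) (r : int) : Prop :=
  forall (p : nat) (e : int), r - wprev p <= e -> loccoh_vanish I p e.

Definition koszul_regularity_is (I : S -> Prop) (r : int) : Prop :=
  koszul_regular I r /\ forall r', koszul_regular I r' -> r <= r'.

Definition generated_in_degrees_lt (I : S -> Prop) (b : int) : Prop :=
  forall f, I f -> exists s : seq (S * S),
    (forall q, q \in s -> I q.2 /\ exists e : int, e < b /\ whomog e q.2) /\
    f = \sum_(q <- s) q.1 * q.2.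

End Defs.

From HB Require Import structures.
From mathcomp Require Import all_boot all_order all_algebra.
From mathcomp Require Import mpoly.
From mathcomp Require Import zify ring.
Set Implicit Arguments. Unset Strict Implicit. Unset Printing Implicit Defensive.
Import Order.TTheory GRing.Theory Num.Theory.
Local Open Scope ring_scope.

(* Let [g] in [IX] be homogeneous of degree [e >= r + w^2] and write
   [g = \sum_i x_i h_i].  The family [(h_i)] is a Koszul 1-cycle of [S/IX].  A
   staircase chase in the double complex built from the Cech complex and the
   Koszul complex of [x_0, ..., x_n] shows that it is a boundary: after
   localising at [x_K] the rows are exact, multiplication by [x_K] being
   null-homotopic on the Koszul complex, and the column at a Koszul index [A]
   with [|A| = p + 1] is exact at Cech degree [p] because it computes
   [H^p_m(S/IX)] in degree [e - w(A) >= r - w^(p-1)], as [w(A) <= w^2 + w^(p-1)].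
   Correcting the [h_i] by this boundary puts them in [IX], so [g] is a
   combination of elements of [IX] of smaller degree, and we induct on [e]. *)

Section WeightedHomogeneity.
Variables (k : fieldType) (n : nat) (d : 'I_n.+1 -> nat).
Notation S := {mpoly k[n.+1]}.
Notation whomog := (@whomog k n d).
Implicit Types (f g : S) (e : int).

Lemma wdegD (m1 m2 : 'X_{1..n.+1}) : wdeg d (m1 + m2)%MM = (wdeg d m1 + wdeg d m2)%N.
Proof. by rewrite /wdeg -big_split; apply: eq_bigr => i _; rewrite mnmDE mulnDl. Qed.

Lemma wdeg0 : wdeg d 0%MM = 0%N.
Proof. by rewrite /wdeg big1 // => i _; rewrite mnm0E. Qed.

Lemma wdegU (i : 'I_n.+1) : wdeg d U_(i)%MM = d i.
Proof.
rewrite /wdeg (bigD1 i) //= mnm1E eqxx mul1n big1 ?addn0 // => j ji.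
by rewrite mnm1E eq_sym (negbTE ji).
Qed.

Lemma whomog_deg_eq e1 e2 f : e1 = e2 -> whomog e1 f -> whomog e2 f.
Proof. by move=> ->. Qed.

Lemma whomog0 e : whomog e 0.
Proof. by move=> m; rewrite msupp0. Qed.

Lemma whomogD e f g : whomog e f -> whomog e g -> whomog e (f + g).
Proof. by move=> hf hg m /msuppD_le; rewrite mem_cat => /orP[/hf|/hg]. Qed.

Lemma whomogN e f : whomog e f -> whomog e (- f).
Proof. by move=> hf m; rewrite (perm_mem (msuppN _)) => /hf. Qed.

Lemma whomogB e f g : whomog e f -> whomog e g -> whomog e (f - g).
Proof. by move=> hf hg; apply/whomogD/whomogN. Qed.

Lemma whomogM e1 e2 f g : whomog e1 f -> whomog e2 g -> whomog (e1 + e2) (f * g).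
Proof.
move=> hf hg m /msuppM_le /allpairsP [[m1 m2] /= [/hf h1 /hg h2 ->]].
by rewrite wdegD PoszD h1 h2.
Qed.

Lemma whomogZ e c f : whomog e f -> whomog e (c *: f).
Proof. by move=> hf m /msuppZ_le /hf. Qed.

Lemma whomog_sum e (I : Type) (r : seq I) (P : pred I) (F : I -> S) :
  (forall i, P i -> whomog e (F i)) -> whomog e (\sum_(i <- r | P i) F i).
Proof. by move=> h; apply: (big_ind (whomog e)); [apply: whomog0 | apply: whomogD |]. Qed.

Lemma whomog_mpolyX (m : 'X_{1..n.+1}) : whomog (wdeg d m) 'X_[m].
Proof. by move=> m'; rewrite msuppX inE => /eqP ->. Qed.

Lemma whomog1 : whomog 0 1.
Proof. by have := whomog_mpolyX (m := 0%MM); rewrite mpolyX0 wdeg0. Qed.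

Lemma whomogX (i : 'I_n.+1) : whomog (d i) 'X_i.
Proof. by have := whomog_mpolyX (m := U_(i)%MM); rewrite wdegU. Qed.

Lemma whomogXn (i : 'I_n.+1) N : whomog (N * d i)%N ('X_i ^+ N).
Proof.
elim: N => [|N ih]; first by rewrite expr0; apply: whomog1.
by rewrite exprS mulSn PoszD; apply: whomogM ih; apply: whomogX.
Qed.

Lemma whomog_sign N : whomog 0 ((-1) ^+ N).
Proof.
elim: N => [|N ih]; first by rewrite expr0; apply: whomog1.
by rewrite exprS mulN1r; apply: whomogN.
Qed.

Lemma whomog_csign j K : whomog 0 (csign k j K).
Proof. exact: whomog_sign. Qed.

Lemma whomog_xpow J N : whomog (N * wset d J)%N (xpow k J N).
Proof.
rewrite /xpow /wset big_distrr /=.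
elim/big_rec2: _ => [|j y p _ hp]; first exact: whomog1.
by rewrite PoszD; apply: whomogM hp; apply: whomogXn.
Qed.

Lemma whomog_wcomp e f : whomog e (wcomp d e f).
Proof.
by apply: whomog_sum => m /eqP <-; apply/whomogZ/whomog_mpolyX.
Qed.

Lemma wcomp_sum f :
  f = \sum_(e < (\max_(m <- msupp f) wdeg d m).+1) wcomp d (e : nat)%:Z f.
Proof.
rewrite {1}(mpolyE f) /wcomp.
under [RHS]eq_bigr => e _ do rewrite big_mkcond.
rewrite [RHS]exchange_big /=; apply: eq_big_seq => m hm.
have hlt : (wdeg d m < (\max_(m <- msupp f) wdeg d m).+1)%N.
  by rewrite ltnS; apply: (@leq_bigmax_seq _ (msupp f) xpredT (wdeg d) m hm).
rewrite (bigD1 (Ordinal hlt)) //= eqxx big1 ?addr0 // => e he.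
case: eqP => // /eqP; rewrite eqz_nat => /eqP h.
by move: he; rewrite -(inj_eq val_inj) /= h eqxx.
Qed.

Lemma whomog_lt0_eq0 e f : e < 0 -> whomog e f -> f = 0.
Proof.
move=> he hf; apply: msuppnil0; case E: (msupp f) => [|m s] //.
have := hf m; rewrite E inE eqxx => /(_ isT); lia.
Qed.

Lemma whomog0_eq_scale1 f : (forall i, (0 < d i)%N) -> whomog 0 f ->
  f = (\sum_(m <- msupp f) f@_m) *: 1.
Proof.
move=> dpos h0; rewrite {1}(mpolyE f) scaler_suml; apply: eq_big_seq => m hm.
suff -> : m = 0%MM by rewrite mpolyX0.
have /eqP := h0 m hm; rewrite eqz_nat /wdeg sum_nat_eq0 => /forallP hz.
apply/mnmP => i; rewrite mnm0E; have := hz i.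
by rewrite muln_eq0 => /orP [/eqP //|]; rewrite eqn0Ngt dpos.
Qed.

Lemma whomog_decomp (e : nat) f : (0 < e)%N -> whomog e f ->
  exists h : 'I_n.+1 -> S,
    f = \sum_i 'X_i * h i /\ forall i, whomog (e%:Z - (d i)%:Z) (h i).
Proof.
move=> he hf; rewrite (mpolyE f).
have : forall m, m \in msupp f -> wdeg d m = e by move=> m /hf [].
elim: (msupp f) => [|m s ih] hs.
  exists (fun _ => 0); split => [|i]; last exact: whomog0.
  by rewrite big_nil big1 // => i _; rewrite mulr0.
have [h [eh hh]] := ih (fun m' hm' => hs m' (@mem_behead _ (m :: s) _ hm')).
have hm : wdeg d m = e by apply: hs; rewrite inE eqxx.
have [i hi] : exists i, (0 < m i)%N.
  case: (pickP (fun i => (0 < m i)%N)) => [i hi|hn]; first by exists i.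
  move: hm he; rewrite /wdeg big1 => [<-//|i _].
  by have := hn i; rewrite /= lt0n => /negbFE /eqP ->.
pose m' := (m - U_(i))%MM.
have em : m = (U_(i) + m')%MM.
  rewrite addmC submK //; apply/mnm_lepP => j; rewrite mnm1E.
  by case: (eqVneq i j) => [<-|].
exists (fun j => h j + (if j == i then f@_m *: 'X_[m'] else 0)); split.
  rewrite big_cons eh addrC; under [X in _ = X]eq_bigr => j _ do rewrite mulrDr.
  rewrite big_split /=; congr (_ + _).
  rewrite (bigD1 i) //= eqxx big1 ?addr0 => [|j /negbTE ->]; last by rewrite mulr0.
  by rewrite [X in 'X_[X]]em mpolyXD scalerAr.
move=> j; apply: whomogD => //; case: eqP => [->|_]; last exact: whomog0.
apply/whomogZ/(whomog_deg_eq _ (whomog_mpolyX (m := m'))).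
by move: hm; rewrite em wdegD wdegU; lia.
Qed.

End WeightedHomogeneity.

(* [whomog] unfolds to a [forall], which would make these indices implicit. *)
Arguments whomog_mpolyX {k n} d m.
Arguments whomogX {k n} d i.
Arguments whomogXn {k n} d i N.
Arguments whomog_csign {k n} d j K.
Arguments whomog_xpow {k n} d J N.
Arguments whomog_wcomp {k n} d e f.

Section MonomialPowers.
Variables (k : fieldType) (n : nat).
Notation I := 'I_n.+1.
Notation xp := (@xpow k n).
Implicit Types (J K : {set I}).

Lemma xpowD J a b : xp J (a + b)%N = xp J a * xp J b.
Proof. by rewrite /xpow -big_split; apply: eq_bigr => i _; rewrite exprD. Qed.

Lemma xpowD1 j K t : j \in K -> xp K t = 'X_j ^+ t * xp (K :\ j) t.
Proof. by move=> jK; rewrite /xpow (big_setD1 _ jK). Qed.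

Lemma xpow_set0 t : xp set0 t = 1.
Proof. by rewrite /xpow big_set0. Qed.

Lemma xpow_subset J K t : J \subset K -> xp K t = xp (K :\: J) t * xp J t.
Proof.
by move=> JK; rewrite /xpow (big_setID J) mulrC (setIidPr JK).
Qed.

End MonomialPowers.

Section KoszulCech.
Variables (k : fieldType) (n : nat).
Notation S := {mpoly k[n.+1]}.
Notation I := 'I_n.+1.
Notation sg := (@csign k n).
Notation xp := (@xpow k n).
Implicit Types (i j x : I) (X J K A B : {set I}).

Lemma csignU i x X : i \notin X -> sg x (i |: X) = (-1) ^+ (i < x)%N * sg x X.
Proof.
move=> iX; rewrite /csign -exprD; congr (_ ^+ _).
have -> : [set y in i |: X | (y < x)%N] =
    if (i < x)%N then i |: [set y in X | (y < x)%N] else [set y in X | (y < x)%N].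
  apply/setP => y; rewrite !inE; case: (boolP (i < x)%N) => hi; rewrite ?inE;
    case: (eqVneq y i) => [->|] //=; rewrite ?hi ?(negbTE hi) ?andbF //.
by case: (i < x)%N; rewrite ?cardsU1 ?inE ?(negbTE iX).
Qed.

Lemma csignD1 i x X : i \in X -> sg x X = (-1) ^+ (i < x)%N * sg x (X :\ i).
Proof. by move=> iX; rewrite -{1}(setD1K iX) csignU // setD11. Qed.

Lemma csignU1_id x X : sg x (x |: X) = sg x X.
Proof.
case: (boolP (x \in X)) => xX; first by rewrite (setUidPr _) // sub1set.
by rewrite csignU // ltnn mul1r.
Qed.

Lemma csign_sqr x X : sg x X * sg x X = 1.
Proof. by rewrite -expr2 sqrr_sign. Qed.

Lemma sign_ltnC i j : i != j -> (-1) ^+ (i < j)%N = - (-1) ^+ (j < i)%N :> S.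
Proof.
move=> ij; rewrite -signrN; case: ltngtP => // eij.
by rewrite (val_inj eij) eqxx in ij.
Qed.

(* Double cochains are families [a J A] indexed by a Cech index [J] (a fraction
   over [x_J^N] in [S_{x_J}]) and a Koszul index [A] (the coefficient of [e_A]). *)
Definition koszul_diff (b : {set I} -> {set I} -> S) J B : S :=
  \sum_(i | i \notin B) sg i (i |: B) * 'X_i * b J (i |: B).

Definition cech_diff (N : nat) (a : {set I} -> {set I} -> S) K A : S :=
  \sum_(j in K) sg j K * a (K :\ j) A * 'X_j ^+ N.

Definition koszul_contract j (c : S) (b : {set I} -> {set I} -> S) K A : S :=
  if j \in A then sg j A * b K (A :\ j) * c else 0.

Lemma sum_antisym_eq0 (F : I -> I -> S) :
  (forall i, F i i = 0) -> (forall i j, i != j -> F j i = - F i j) ->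
  \sum_i \sum_j F i j = 0.
Proof.
move=> F0 Fa.
have -> : \sum_i \sum_j F i j =
    \sum_(i : I) \sum_(j : I) (if (j < i)%N then F i j else 0) +
    \sum_(i : I) \sum_(j : I) (if (i < j)%N then F i j else 0).
  rewrite -big_split; apply: eq_bigr => i _; rewrite -big_split.
  apply: eq_bigr => j _ /=; case: ltngtP => h; rewrite ?addr0 ?add0r //.
  by rewrite (val_inj h) F0.
rewrite [X in _ + X]exchange_big -big_split big1 //= => i _.
rewrite -big_split big1 //= => j _.
case: ltngtP => h; rewrite ?addr0 //.
have ij : i != j by apply/eqP => eij; rewrite eij ltnn in h.
by rewrite (Fa i j ij) subrr.
Qed.

Lemma koszul_diffK b J B : koszul_diff (koszul_diff b) J B = 0.
Proof.
rewrite /koszul_diff; under eq_bigr => i iB do rewrite big_distrr /=.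
rewrite big_mkcond /=; under eq_bigr => i _ do rewrite big_mkcond /=.
rewrite -[RHS](@sum_antisym_eq0 (fun i j => if i \notin B then
    if j \notin i |: B then sg i (i |: B) * 'X_i *
      (sg j (j |: (i |: B)) * 'X_j * b J (j |: (i |: B))) else 0 else 0)).
- by apply: eq_bigr => i _; case: ifP => //; rewrite big1.
- by move=> i; rewrite setU11 /= if_same.
move=> i j ij /=; rewrite !in_setU1 !negb_or (eq_sym j i) ij /=.
case: (boolP (i \in B)) => iB; case: (boolP (j \in B)) => jB /=; rewrite ?oppr0 //.
rewrite setUCA !csignU1_id !csignU //; last by rewrite in_setU1 negb_or eq_sym ij.
rewrite (sign_ltnC ij) ltnn expr0 mul1r.
move: (sg j B) (sg i B) ('X_i : S) ('X_j : S) (b J (j |: (i |: B))) => ?????; ring.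
Qed.

Lemma cech_diffK N a K A : cech_diff N (cech_diff N a) K A = 0.
Proof.
rewrite /cech_diff; under eq_bigr => j jK do rewrite big_distrr big_distrl /=.
rewrite big_mkcond /=; under eq_bigr => j _ do rewrite big_mkcond /=.
rewrite -[RHS](@sum_antisym_eq0 (fun j i => if j \in K then
    if i \in K :\ j then sg j K * (sg i (K :\ j) * a ((K :\ j) :\ i) A *
      'X_i ^+ N) * 'X_j ^+ N else 0 else 0)).
- by apply: eq_bigr => j _; case: ifP => //; rewrite big1.
- by move=> i; rewrite setD11 /= if_same.
move=> j i ij /=; rewrite !in_setD1 (eq_sym i j) ij /=.
case: (boolP (i \in K)) => iK; case: (boolP (j \in K)) => jK /=; rewrite ?oppr0 //.
rewrite [(K :\ i) :\ j]setDDl setUC -setDDl (csignD1 j iK) (csignD1 i jK).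
rewrite (sign_ltnC ij).
move: (sg i (K :\ j)) (sg j (K :\ i)) ('X_i ^+ N : S) ('X_j ^+ N : S)
  (a ((K :\ j) :\ i) A) ((-1) ^+ (i < j)%N : S) => ?????? /=; ring.
Qed.

Lemma koszul_cech_diffC N a K B :
  koszul_diff (cech_diff N a) K B = cech_diff N (koszul_diff a) K B.
Proof.
rewrite /koszul_diff /cech_diff; under eq_bigr => i _ do rewrite big_distrr /=.
rewrite exchange_big /=; apply: eq_bigr => j _.
rewrite big_distrr big_distrl /=; apply: eq_bigr => i _.
move: (sg i (i |: B)) (sg j K) ('X_i : S) ('X_j ^+ N : S) (a (K :\ j) (i |: B)) => ?????.
ring.
Qed.

Lemma koszul_contract_homotopy j (c : S) b K A :
  koszul_diff (koszul_contract j c b) K A + koszul_contract j c (koszul_diff b) K A =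
  'X_j * c * b K A.
Proof.
rewrite /koszul_contract /koszul_diff; case: (boolP (j \in A)) => jA; last first.
  rewrite addr0 (bigD1 j) //= setU11 setU1K // csignU1_id big1 ?addr0.
    by rewrite mulrA -[RHS]mul1r -(csign_sqr j A); ring.
  move=> i /andP [iA ij]; rewrite in_setU1 eq_sym (negbTE ij) (negbTE jA).
  by rewrite mulr0.
rewrite (big_distrr (sg j A)) big_distrl /= [X in _ + X](bigD1 j) ?setD11 //=.
rewrite setD1K // addrCA.
set s1 := \sum_(i | _) _; set s2 := \sum_(i | _) _.
suff -> : s1 + s2 = 0 by rewrite addr0 -[RHS]mul1r -(csign_sqr j A); ring.
rewrite {}/s1 {}/s2 -[X in _ + X](@eq_bigl _ _ _ _ _ (fun i => i \notin A)); last first.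
  move=> i; rewrite in_setD1 negb_and negbK.
  by case: (eqVneq i j) => [->|]; rewrite ?jA ?andbT ?andbF.
rewrite -big_split big1 //= => i iA.
have ij : i != j by apply: contraNneq iA => ->.
have -> : (i |: A) :\ j = i |: (A :\ j).
  by apply/setP => y; rewrite !inE; case: (eqVneq y i) => [->|]; rewrite ?ij.
rewrite in_setU1 jA orbT !csignU1_id (csignU j iA) (csignD1 i jA) (sign_ltnC ij).
have := sqrr_sign S (j < i)%N; rewrite expr2.
move: (sg i (A :\ j)) (sg j A) ('X_i : S) c (b K (i |: A :\ j))
  ((-1) ^+ (j < i)%N : S) => a1 a2 a3 a4 a5 a6 h6.
have -> : a6 * a1 * a3 * (- a6 * a2 * a5 * a4) = - ((a6 * a6) * (a2 * (a1 * a3 * a5) * a4)) by ring.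
by rewrite h6 mul1r addNr.
Qed.

Lemma koszul_diffB (u v : {set I} -> {set I} -> S) J B :
  koszul_diff (fun J A => u J A - v J A) J B = koszul_diff u J B - koszul_diff v J B.
Proof. by rewrite /koszul_diff -sumrB; apply: eq_bigr => i _; rewrite mulrBr. Qed.

Lemma cech_diffB N (u v : {set I} -> {set I} -> S) K A :
  cech_diff N (fun J A => u J A - v J A) K A = cech_diff N u K A - cech_diff N v K A.
Proof. by rewrite /cech_diff -sumrB; apply: eq_bigr => i _; rewrite mulrBr mulrBl. Qed.

Lemma koszul_diffMl (f : {set I} -> S) (u : {set I} -> {set I} -> S) J B :
  koszul_diff (fun J A => f J * u J A) J B = f J * koszul_diff u J B.
Proof.
rewrite /koszul_diff big_distrr; apply: eq_bigr => i _.
exact: mulrCA.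
Qed.

Lemma cech_diff_xpow N t (g : {set I} -> {set I} -> S) K A :
  cech_diff (N + t) (fun L A => g L A * xp L t) K A = xp K t * cech_diff N g K A.
Proof.
rewrite /cech_diff big_distrr /=; apply: eq_bigr => j jK.
rewrite (xpowD1 k t jK) exprD.
move: (sg j K) ('X_j ^+ N : S) ('X_j ^+ t : S) (g (K :\ j) A) (xp (K :\ j) t) => ?????.
ring.
Qed.

Definition row_pivot K : I := odflt ord0 [pick j in K].

Lemma row_pivot_mem K : K != set0 -> row_pivot K \in K.
Proof.
rewrite /row_pivot; case: pickP => [x -> //|h].
by case/set0Pn => x; rewrite h.
Qed.

(* Multiplication by [x_K] on the Koszul complex is null-homotopic, through
   the contraction by [e_j], [j \in K], followed by [x_(K \ j)]. *)
Definition row_homotopy (b : {set I} -> {set I} -> S) K A : S :=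
  koszul_contract (row_pivot K) (xp (K :\ row_pivot K) 1) b K A.

Lemma row_homotopy_eq b K A : K != set0 ->
  xp K 1 * b K A - koszul_diff (row_homotopy b) K A =
  row_homotopy (koszul_diff b) K A.
Proof.
move=> K0; rewrite (xpowD1 k 1 (row_pivot_mem K0)) expr1.
by rewrite -(koszul_contract_homotopy _ _ b) addrC addKr.
Qed.

End KoszulCech.

Section LocalVanishing.
Variables (k : fieldType) (n : nat) (IX : {mpoly k[n.+1]} -> Prop).
Hypothesis hI : is_ideal IX.
Notation S := {mpoly k[n.+1]}.
Notation I := 'I_n.+1.
Notation xp := (@xpow k n).
Implicit Types (u v : S) (J K A B L : {set I}).

Lemma ideal0 : IX 0. Proof. by case: hI. Qed.
Lemma idealD u v : IX u -> IX v -> IX (u + v). Proof. by case: hI => _ h _; apply: h. Qed.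
Lemma idealMl u v : IX v -> IX (u * v). Proof. by case: hI => _ _ h; apply: h. Qed.

(* [u] maps to zero in the localisation [(S/IX)_{x_J}]. *)
Definition loc_zero J u := exists m, IX (xp J m * u).

Lemma loc_zeroI J u : IX u -> loc_zero J u.
Proof. by exists 0%N; apply: idealMl. Qed.

Lemma loc_zero0 J : loc_zero J 0.
Proof. exact/loc_zeroI/ideal0. Qed.

Lemma loc_zeroMl J u v : loc_zero J u -> loc_zero J (v * u).
Proof. by case=> m h; exists m; rewrite mulrCA; apply: idealMl. Qed.

Lemma loc_zeroMr J u v : loc_zero J u -> loc_zero J (u * v).
Proof. by rewrite mulrC; apply: loc_zeroMl. Qed.

Lemma loc_zeroD J u v : loc_zero J u -> loc_zero J v -> loc_zero J (u + v).
Proof.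
case=> m1 h1 [m2 h2]; exists (m1 + m2)%N; rewrite xpowD mulrDr.
by apply: idealD; [rewrite mulrAC mulrC | rewrite -mulrA]; apply: idealMl.
Qed.

Lemma loc_zeroN J u : loc_zero J u -> loc_zero J (- u).
Proof. by rewrite -mulN1r; apply: loc_zeroMl. Qed.

Lemma loc_zero_sum J (T : Type) (r : seq T) (P : pred T) (F : T -> S) :
  (forall t, P t -> loc_zero J (F t)) -> loc_zero J (\sum_(t <- r | P t) F t).
Proof.
by move=> h; apply: (big_ind (loc_zero J)); [apply: loc_zero0 | apply: loc_zeroD |].
Qed.

Lemma loc_zero_subset J K u : J \subset K -> loc_zero J u -> loc_zero K u.
Proof.
by move=> JK [m h]; exists m; rewrite (xpow_subset k m JK) -mulrA; apply: idealMl.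
Qed.

Lemma loc_zero_set0 u : loc_zero set0 u -> IX u.
Proof. by case=> m; rewrite xpow_set0 mul1r. Qed.

Lemma loc_zero_cech_diff q N (u : {set I} -> {set I} -> S) K A :
  (forall L, #|L| = q -> loc_zero L (u L A)) -> #|K| = q.+1 ->
  loc_zero K (cech_diff N u K A).
Proof.
move=> hu hK; apply: loc_zero_sum => j jK; apply/loc_zeroMr/loc_zeroMl.
apply: (@loc_zero_subset (K :\ j)); first exact: subsetDl.
by apply: hu; move: hK; rewrite (cardsD1 j) jK add1n; case.
Qed.

Lemma loc_zero_koszul_diff q (u : {set I} -> {set I} -> S) J B :
  (forall A, #|A| = q.+1 -> loc_zero J (u J A)) -> #|B| = q ->
  loc_zero J (koszul_diff u J B).
Proof.
move=> hu hB; apply: loc_zero_sum => i iB; apply/loc_zeroMl/hu.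
by rewrite cardsU1 iB hB.
Qed.

Lemma loc_zero_row_homotopy b K A : K != set0 ->
  (row_pivot K \in A -> loc_zero K (koszul_diff b K (A :\ row_pivot K))) ->
  loc_zero K (xp K 1 * b K A - koszul_diff (row_homotopy b) K A).
Proof.
move=> K0 hb; rewrite row_homotopy_eq // /row_homotopy /koszul_contract.
by case: ifP => jA; [apply/loc_zeroMr/loc_zeroMl/hb | apply: loc_zero0].
Qed.

End LocalVanishing.

Section Chase.
Variables (k : fieldType) (n : nat) (d : 'I_n.+1 -> nat) (IX : {mpoly k[n.+1]} -> Prop).
Hypothesis hI : is_ideal IX.
Variable e0 : int.
Notation S := {mpoly k[n.+1]}.
Notation I := 'I_n.+1.
Notation xp := (@xpow k n).
Notation whomog := (@whomog k n d).
Notation w := (wset d).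
Notation lz := (loc_zero IX).
Implicit Types (i j : I) (J K A B L : {set I}) (a b c g : {set I} -> {set I} -> S).

Lemma wsetD1 j K : j \in K -> w K = (d j + w (K :\ j))%N.
Proof. by move=> jK; rewrite /wset (big_setD1 _ jK). Qed.

Lemma wsetU1 i A : i \notin A -> w (i |: A) = (d i + w A)%N.
Proof. by move=> iA; rewrite /wset (big_setU1 _ iA). Qed.

(* [a J A / x_J^N] is homogeneous of degree [e0 - w A], i.e. the double
   cochain has total degree [e0], [e_A] having degree [w A]. *)
Definition dcochain_homog p q N a := forall J A, #|J| = p -> #|A| = q ->
  whomog (e0 - (w A)%:Z + (N * w J)%N%:Z) (a J A).

Lemma whomog_koszul_diff p q N c J B : dcochain_homog p q.+1 N c ->
  #|J| = p -> #|B| = q ->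
  whomog (e0 - (w B)%:Z + (N * w J)%N%:Z) (koszul_diff c J B).
Proof.
move=> hc hJ hB; apply: whomog_sum => i iB.
have := whomogM (whomogM (whomog_csign d i (i |: B)) (whomogX d i)) (hc J (i |: B) hJ _).
by rewrite cardsU1 iB hB => /(_ erefl); apply: whomog_deg_eq; rewrite wsetU1 //; lia.
Qed.

Lemma whomog_cech_diff p q N a K A : dcochain_homog p q N a ->
  #|K| = p.+1 -> #|A| = q ->
  whomog (e0 - (w A)%:Z + (N * w K)%N%:Z) (cech_diff N a K A).
Proof.
move=> ha hK hA; apply: whomog_sum => j jK.
have hK' : #|K :\ j| = p by move: hK; rewrite (cardsD1 j) jK add1n; case.
have := whomogM (whomogM (whomog_csign d j K) (ha _ _ hK' hA)) (whomogXn d j N).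
apply: whomog_deg_eq; rewrite (wsetD1 jK) mulnDr.
by move: (w A) (w (K :\ j)) (d j) => ???; lia.
Qed.

Definition chase_exact p := forall N a, dcochain_homog p p.+1 N a ->
  (forall K B, #|K| = p.+1 -> #|B| = p -> lz K (koszul_diff (cech_diff N a) K B)) ->
  exists t c g, dcochain_homog p p.+2 (N + t) c /\
   (forall L A, (#|L|).+1 = p -> #|A| = p.+1 ->
      whomog (e0 - (w A)%:Z + ((N + t) * w L)%N%:Z) (g L A)) /\
   (forall J A, #|J| = p -> #|A| = p.+1 ->
      lz J (xp J t * a J A - koszul_diff c J A - cech_diff (N + t) g J A)).

Lemma chase_exact_overflow p : (n.+1 <= p)%N -> chase_exact p.
Proof.
move=> hp N a _ _; exists 0%N, (fun _ _ => 0), (fun _ _ => 0).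
split; [|split] => [J A _ _|L A _ _|J A _ hA]; try exact: whomog0.
by have := max_card (mem A); rewrite card_ord hA; lia.
Qed.

Hypothesis hvan : forall p A, #|A| = p.+1 -> loccoh_vanish d IX p (e0 - (w A)%:Z).

Lemma uniform_coboundary p M a : dcochain_homog p p.+1 M a ->
  (forall K A, #|K| = p.+1 -> #|A| = p.+1 -> lz K (cech_diff M a K A)) ->
  exists T g,
   (forall L A, (#|L|).+1 = p -> #|A| = p.+1 ->
      whomog (e0 - (w A)%:Z + ((T + M) * w L)%N%:Z) (g L A)) /\
   (forall J A, #|J| = p -> #|A| = p.+1 ->
      lz J (xp J T * a J A - cech_diff (T + M) g J A)).
Proof.
move=> ha hcoc.
have /fin_all_exists [NgA hNgA] : forall A, exists Ng : nat * ({set I} -> S),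
    #|A| = p.+1 ->
    (forall L, (#|L|).+1 = p -> whomog (e0 - (w A)%:Z + (Ng.1 * w L)%N%:Z) (Ng.2 L)) /\
    (forall J, #|J| = p ->
       lz J (xp J Ng.1 * a J A - xp J M * cech_diff Ng.1 (fun L _ => Ng.2 L) J A)).
  move=> A; case: (eqVneq #|A| p.+1) => hA; last first.
    by exists (0%N, fun _ => 0) => /eqP; rewrite (negbTE hA).
  have [N' [g' [hg' hcob]]] := @hvan p A hA M (fun J => a J A)
    (fun J hJ => ha J A hJ hA) (fun K hK => hcoc K A hK hA).
  by exists (N', g').
pose T := (\max_A (NgA A).1)%N.
have hNT A : ((NgA A).1 <= T)%N := leq_bigmax A.
exists T, (fun L A => (NgA A).2 L * xp L (T - (NgA A).1) * xp L M); split.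
  move=> L A hL hA; have [hg _] := hNgA A hA.
  have := whomogM (whomogM (hg L hL) (whomog_xpow d L (T - (NgA A).1)))
    (whomog_xpow d L M).
  apply: whomog_deg_eq; have := hNT A.
  by move: (w A) (w L) (NgA A).1 => x y z hz; nia.
move=> J A hJ hA; have [_ hcob] := hNgA A hA.
change (lz J (xp J T * a J A - cech_diff (T + M)
  (fun L _ => (NgA A).2 L * xp L (T - (NgA A).1) * xp L M) J A)).
have := hNT A; case: (NgA A) hcob => NA gA /= hcob hNA.
rewrite (cech_diff_xpow _ _ (fun L _ => gA L * xp L (T - NA))).
have -> : cech_diff T (fun L _ => gA L * xp L (T - NA)) J A =
    xp J (T - NA) * cech_diff NA (fun L _ => gA L) J A.
  by rewrite -cech_diff_xpow subnKC.
have -> : xp J T = xp J NA * xp J (T - NA) by rewrite -xpowD subnKC.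
have -> : xp J NA * xp J (T - NA) * a J A -
    xp J M * (xp J (T - NA) * cech_diff NA (fun L _ => gA L) J A) =
    xp J (T - NA) * (xp J NA * a J A -
    xp J M * cech_diff NA (fun L _ => gA L) J A) by ring.
exact/loc_zeroMl/hcob.
Qed.


Section ChaseStep.
Variables (p N : nat) (a : {set I} -> {set I} -> S).
Hypothesis ha : dcochain_homog p p.+1 N a.
Hypothesis ha_cycle : forall K B, #|K| = p.+1 -> #|B| = p ->
  lz K (koszul_diff (cech_diff N a) K B).

Lemma row_homotopy_homog :
  dcochain_homog p.+1 p.+2 (N + 1) (row_homotopy (cech_diff N a)).
Proof.
move=> K A hK hA; rewrite /row_homotopy /koszul_contract.
case: ifP => jA; last exact: whomog0.
have jK : row_pivot K \in K by apply: row_pivot_mem; rewrite -card_gt0 hK.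
have hA' : #|A :\ row_pivot K| = p.+1.
  by move: hA; rewrite (cardsD1 (row_pivot K)) jA add1n; case.
have := whomogM (whomogM (whomog_csign d (row_pivot K) A)
  (whomog_cech_diff ha hK hA')) (whomog_xpow d (K :\ row_pivot K) 1).
apply: whomog_deg_eq; rewrite (wsetD1 jA) (wsetD1 jK).
by move: (w (A :\ _)) (w (K :\ _)) (d _) => x y z; nia.
Qed.

Lemma row_homotopy_exact K A : #|K| = p.+1 -> #|A| = p.+1 ->
  lz K (xp K 1 * cech_diff N a K A - koszul_diff (row_homotopy (cech_diff N a)) K A).
Proof.
move=> hK hA; apply: (loc_zero_row_homotopy hI); first by rewrite -card_gt0 hK.
move=> jA; apply: ha_cycle => //.
by move: hA; rewrite (cardsD1 (row_pivot K)) jA add1n; case.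
Qed.

Lemma row_homotopy_cycle K B : #|K| = p.+2 -> #|B| = p.+1 ->
  lz K (koszul_diff (cech_diff (N + 1) (row_homotopy (cech_diff N a))) K B).
Proof.
move=> hK hB; rewrite koszul_cech_diffC; set a1 := row_homotopy _.
have -> : cech_diff (N + 1) (koszul_diff a1) K B =
    cech_diff (N + 1) (fun K A => koszul_diff a1 K A - cech_diff N a K A * xp K 1) K B +
    cech_diff (N + 1) (fun K A => cech_diff N a K A * xp K 1) K B.
  by rewrite cech_diffB subrK.
rewrite cech_diff_xpow cech_diffK mulr0 addr0.
apply: (loc_zero_cech_diff hI (q := p.+1)) => // L hL.
by have := loc_zeroN hI (row_homotopy_exact hL hB); rewrite opprB mulrC.
Qed.

Variables (t : nat) (c g : {set I} -> {set I} -> S).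
Hypothesis hc : dcochain_homog p.+1 p.+2 (N + 1 + t) c.
Hypothesis hg : forall L A, (#|L|).+1 = p.+1 -> #|A| = p.+2 ->
  whomog (e0 - (w A)%:Z + ((N + 1 + t) * w L)%N%:Z) (g L A).
Hypothesis hr : forall J A, #|J| = p.+1 -> #|A| = p.+2 ->
  lz J (xp J t * row_homotopy (cech_diff N a) J A - koszul_diff c J A -
        cech_diff (N + 1 + t) g J A).

Let corrected J A := a J A * xp J (1 + t) - koszul_diff g J A.

Lemma corrected_homog : dcochain_homog p p.+1 (N + (1 + t)) corrected.
Proof.
move=> J A hJ hA; apply: whomogB.
  have := whomogM (ha hJ hA) (whomog_xpow d J (1 + t)).
  by apply: whomog_deg_eq; move: (w A) (w J) => x y; nia.
rewrite addnA; apply: (whomog_koszul_diff _ hJ hA) => L B hL hB.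
by apply: hg; rewrite ?hL.
Qed.

Lemma corrected_cocycle K A : #|K| = p.+1 -> #|A| = p.+1 ->
  lz K (cech_diff (N + (1 + t)) corrected K A).
Proof.
move=> hK hA; set a1 := row_homotopy (cech_diff N a).
rewrite /corrected cech_diffB cech_diff_xpow -koszul_cech_diffC addnA.
pose D J B := xp J t * a1 J B - koszul_diff c J B - cech_diff (N + 1 + t) g J B.
have -> : koszul_diff (cech_diff (N + 1 + t) g) K A =
    xp K t * koszul_diff a1 K A - koszul_diff D K A.
  rewrite /D (koszul_diffB (fun J B => xp J t * a1 J B - koszul_diff c J B)).
  rewrite (koszul_diffB (fun J B => xp J t * a1 J B)) koszul_diffK subr0.
  by rewrite koszul_diffMl opprB addrC subrK.
have -> : xp K (1 + t) * cech_diff N a K A -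
    (xp K t * koszul_diff a1 K A - koszul_diff D K A) =
    xp K t * (xp K 1 * cech_diff N a K A - koszul_diff a1 K A) + koszul_diff D K A.
  by rewrite addnC xpowD; ring.
apply: (loc_zeroD hI); first exact/(loc_zeroMl hI)/row_homotopy_exact.
by apply: (loc_zero_koszul_diff hI (q := p.+1)) => // B hB; apply: hr.
Qed.

End ChaseStep.

(* The rows [(S/IX)_{x_K} (x) Koszul] are exact by [row_homotopy]; the column
   at [A] is exact at Cech degree [p] by [hvan]. *)
Lemma chase_exact_step p : chase_exact p.+1 -> chase_exact p.
Proof.
move=> IH N a ha hcyc.
have [t [c [g [hc [hg hr]]]]] :=
  IH _ _ (row_homotopy_homog ha) (row_homotopy_cycle hcyc).
have [T [g' [hg' hr']]] := uniform_coboundary (corrected_homog ha hg)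
  (corrected_cocycle hcyc hr).
have eE : (T + (N + (1 + t)) = N + (1 + t + T))%N by lia.
rewrite eE in hg' hr'.
exists (1 + t + T)%N, (fun J A => xp J T * g J A), g'; split; [|split] => //.
  move=> J A hJ hA; have := whomogM (whomog_xpow d J T) (hg J A _ hA).
  rewrite hJ => /(_ erefl); apply: whomog_deg_eq.
  by move: (w A) (w J) => x y; nia.
move=> J A hJ hA; rewrite koszul_diffMl {1}(addnC (1 + t)) xpowD.
by have := hr' J A hJ hA; congr (lz J (_ - _)); ring.
Qed.

Lemma chase_exact_all p : chase_exact p.
Proof.
have [m] := ubnP (n.+1 - p); elim: m p => // m IH p hp.
case: (leqP n.+1 p) => [/chase_exact_overflow //|hpn].
by apply/chase_exact_step/IH; lia.
Qed.

End Chase.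

Section TopWeights.
Variables (n : nat) (d : 'I_n.+1 -> nat).
Hypothesis hmono : forall i j : 'I_n.+1, (i <= j)%N -> (d i <= d j)%N.
Notation I := 'I_n.+1.
Notation w := (wset d).

Lemma card_geq_bound (A : {set I}) (a : nat) :
  (forall j : I, j \in A -> (a <= j)%N) -> (#|A| <= n.+1 - a)%N.
Proof.
move=> h; rewrite cardE -(size_map val) -(size_iota a (n.+1 - a)).
apply: uniq_leq_size; first by rewrite map_inj_uniq ?enum_uniq //; apply: val_inj.
move=> x /mapP [j]; rewrite mem_enum => /h ja ->; rewrite mem_iota.
by have := ltn_ord j => jn; apply/andP; split; rewrite /=; lia.
Qed.

Lemma wtop0 : wtop d 0 = 0%N.
Proof. by rewrite /wtop big1 // => j; rewrite subn0 leqNgt ltn_ord. Qed.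

Lemma wtopS q : (q <= n)%N -> wtop d q.+1 = (d (inord (n - q)) + wtop d q)%N.
Proof.
move=> hq; have hi : nat_of_ord (inord (n - q) : I) = (n - q)%N by rewrite inordK; lia.
rewrite /wtop (bigD1 (inord (n - q))) /= ?hi; last lia.
congr (_ + _)%N; apply: eq_bigl => j; rewrite -(inj_eq val_inj) /= hi.
by apply/andP/idP => [[h1 /eqP h2] | h]; [lia | split; [lia | apply/eqP; lia]].
Qed.

Lemma wset_le_wtop q (A : {set I}) : #|A| = q -> (w A <= wtop d q)%N.
Proof.
elim: q A => [|q ih] A hA; first by rewrite (cards0_eq hA) /wset big_set0 wtop0.
have [x xA] : exists x, x \in A by apply/set0Pn; rewrite -card_gt0 hA.
case: (@arg_minnP _ x (mem A) (fun i : I => nat_of_ord i) xA) => a aA amin.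
have {}aA : a \in A by [].
have := card_geq_bound amin; rewrite hA => hle.
have hqn : (q <= n)%N by have := ltn_ord a; lia.
rewrite (wsetD1 d aA) wtopS //; apply: leq_add.
  by apply: hmono; rewrite inordK; lia.
by apply: ih; move: hA; rewrite (cardsD1 a) aA add1n; case.
Qed.

Hypothesis hn : (1 <= n)%N.
Hypothesis hd0 : (1 <= d ord0)%N.

Lemma wset_le_wtop2_wprev p (A : {set I}) : #|A| = p.+1 ->
  (w A)%:Z <= (wtop d 2)%:Z + wprev d p.
Proof.
move=> hA; have [x xA] : exists x, x \in A by apply/set0Pn; rewrite -card_gt0 hA.
have hA' : #|A :\ x| = p by move: hA; rewrite (cardsD1 x) xA add1n; case.
case: p hA hA' => [|p] hA hA' /=.
  have -> : A = [set x] by rewrite -(setD1K xA) (cards0_eq hA') setU0.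
  rewrite /wset big_set1 wtopS // wtopS // wtop0.
  have : (d x <= d (inord (n - 0)))%N by apply: hmono; rewrite subn0 inordK ?leq_ord.
  have : (d ord0 <= d (inord (n - 1)))%N by apply: hmono.
  lia.
have [y yA] : exists y, y \in A :\ x by apply/set0Pn; rewrite -card_gt0 hA'.
have hA'' : #|A :\ x :\ y| = p by move: hA'; rewrite (cardsD1 y) yA add1n; case.
have yx : y != x by move: yA; rewrite in_setD1 => /andP [].
have -> : w A = (w [set x; y] + w (A :\ x :\ y))%N.
  rewrite (wsetD1 d xA) (wsetD1 d yA) /wset big_setU1 ?big_set1 ?addnA //.
  by rewrite in_set1 eq_sym.
have := @wset_le_wtop 2 [set x; y]; rewrite cards2 eq_sym yx => /(_ erefl).
have := wset_le_wtop hA''; lia.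
Qed.

End TopWeights.

Section Generation.
Variables (k : fieldType) (n : nat) (d : 'I_n.+1 -> nat) (IX : {mpoly k[n.+1]} -> Prop).
Hypothesis hI : is_ideal IX.
Notation S := {mpoly k[n.+1]}.
Notation I := 'I_n.+1.
Notation whomog := (@whomog k n d).

Lemma koszul_diff_set0 (b : {set I} -> {set I} -> S) J :
  koszul_diff b J set0 = \sum_i 'X_i * b J [set i].
Proof.
rewrite /koszul_diff; apply: eq_big => [i|i _]; first by rewrite in_set0.
rewrite setU0 /csign (_ : [set _ in _ | _] = set0) ?cards0 ?mul1r //.
by apply/setP => y; rewrite !inE; case: eqP => // ->; rewrite ltnn.
Qed.

Lemma ideal_whomog_decomp (e : nat) (g : S) :
  (forall p (A : {set I}), #|A| = p.+1 -> loccoh_vanish d IX p (e%:Z - (wset d A)%:Z)) ->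
  (0 < e)%N -> IX g -> whomog e g ->
  exists u : I -> S, g = \sum_i 'X_i * u i /\
    forall i, IX (u i) /\ whomog (e%:Z - (d i)%:Z) (u i).
Proof.
move=> hvan e_gt0 hg ge.
have [h [gE hh]] := whomog_decomp e_gt0 ge.
pose z (J A : {set I}) := \sum_(i in A) h i.
have hz : dcochain_homog d e%:Z 0 1 0 z.
  move=> J A _ /eqP /cards1P [i ->]; rewrite /z /wset !big_set1.
  by apply: whomog_deg_eq (hh i); lia.
have hz_cycle (K B : {set I}) : #|K| = 1%N -> #|B| = 0%N ->
    loc_zero IX K (koszul_diff (cech_diff 0 z) K B).
  move=> hK /cards0_eq ->; rewrite koszul_cech_diffC.
  apply: (loc_zero_cech_diff hI (q := 0)) => // L _; apply: (loc_zeroI hI).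
  rewrite koszul_diff_set0 (_ : \sum_i _ = g) // gE.
  by apply: eq_bigr => i _; rewrite /z big_set1.
have [t [c [g' [hc [_ hZ]]]]] := chase_exact_all hI hvan hz hz_cycle.
exists (fun i => h i - koszul_diff c set0 [set i]); split.
  under eq_bigr do rewrite mulrBr.
  by rewrite sumrB -koszul_diff_set0 koszul_diffK subr0 gE.
move=> i; split.
  have := hZ set0 [set i] (cards0 _) (cards1 i); move/loc_zero_set0.
  by rewrite xpow_set0 mul1r /cech_diff big_set0 subr0 /z big_set1.
apply: whomogB => //; apply: whomog_deg_eq (whomog_koszul_diff hc (cards0 _) (cards1 i)).
by rewrite /wset big_set1 big_set0 muln0; lia.
Qed.

Lemma ideal_whomog0_eq0 (f : S) : (forall i, (0 < d i)%N) -> ~ IX 1 ->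
  IX f -> whomog 0 f -> f = 0.
Proof.
move=> dpos h1 hf h0; move: (whomog0_eq_scale1 dpos h0) hf.
set c := \sum_(m <- _) _ => fE hf.
have [c0|cn0] := eqVneq c 0; first by rewrite fE c0 scale0r.
case: h1; have -> : (1 : S) = (c^-1 *: 1) * f.
  by rewrite fE -scalerAl mul1r scalerA mulVf // scale1r.
exact: idealMl.
Qed.

Variable b : int.

Definition gen_lt (f : S) := exists s : seq (S * S),
  (forall q, q \in s -> IX q.2 /\ exists e : int, e < b /\ whomog e q.2) /\
  f = \sum_(q <- s) q.1 * q.2.

Lemma gen_lt0 : gen_lt 0.
Proof. by exists [::]; rewrite big_nil. Qed.

Lemma gen_ltD f g : gen_lt f -> gen_lt g -> gen_lt (f + g).
Proof.
move=> [s1 [h1 ->]] [s2 [h2 ->]]; exists (s1 ++ s2); rewrite big_cat; split => //.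
by move=> q; rewrite mem_cat => /orP [/h1|/h2].
Qed.

Lemma gen_ltMl h f : gen_lt f -> gen_lt (h * f).
Proof.
move=> [s [hs ->]]; exists [seq (h * q.1, q.2) | q <- s]; split.
  by move=> q /mapP [q' /hs hq' ->].
by rewrite big_map big_distrr /=; apply: eq_bigr => q _; rewrite mulrA.
Qed.

Lemma gen_lt_sum (T : Type) (r : seq T) (P : pred T) (F : T -> S) :
  (forall i, P i -> gen_lt (F i)) -> gen_lt (\sum_(i <- r | P i) F i).
Proof. by move=> h; apply: (big_ind gen_lt); [apply: gen_lt0 | apply: gen_ltD |]. Qed.

Lemma gen_lt_mem e f : IX f -> whomog e f -> e < b -> gen_lt f.
Proof.
move=> hf he hb; exists [:: (1, f)]; rewrite big_seq1 mul1r; split => //.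
by move=> q; rewrite inE => /eqP ->; split => //; exists e.
Qed.

Lemma gen_lt_whomog (e : nat) f : (forall i, (0 < d i)%N) -> ~ IX 1 ->
  (forall e' : nat, b <= e'%:Z -> forall p (A : {set I}), #|A| = p.+1 ->
     loccoh_vanish d IX p (e'%:Z - (wset d A)%:Z)) ->
  IX f -> whomog e f -> gen_lt f.
Proof.
move=> dpos h1 hvan; elim/ltn_ind: e f => e IH f hf fe.
have [e_lt_b|b_le_e] := ltP e%:Z b; first exact: gen_lt_mem hf fe e_lt_b.
have [e0|e_gt0] := posnP e.
  by move: fe; rewrite e0 => /(ideal_whomog0_eq0 dpos h1 hf) ->; apply: gen_lt0.
have [u [-> hu]] := ideal_whomog_decomp (hvan _ b_le_e) e_gt0 hf fe.
apply: gen_lt_sum => i _; apply: gen_ltMl; have [ui_in ui_hom] := hu i.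
have [di_le_e|e_lt_di] := leqP (d i) e; last first.
  by rewrite (whomog_lt0_eq0 _ ui_hom); [apply: gen_lt0 | lia].
apply: (IH (e - d i)%N); [by have := dpos i; lia | done |].
by apply: whomog_deg_eq ui_hom; lia.
Qed.

End Generation.

Lemma koszul_regular_vanish (k : fieldType) (n : nat) (d : 'I_n.+1 -> nat)
    (IX : {mpoly k[n.+1]} -> Prop) (r : int) :
  (forall i j : 'I_n.+1, (i <= j)%N -> (d i <= d j)%N) -> (1 <= n)%N ->
  (1 <= d ord0)%N -> koszul_regular d IX r ->
  forall e : nat, r + (wtop d 2)%:Z <= e%:Z -> forall p (A : {set 'I_n.+1}),
  #|A| = p.+1 -> loccoh_vanish d IX p (e%:Z - (wset d A)%:Z).
Proof.
move=> hmono hn hd0 hreg e he p A hA; apply: hreg.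
by have := wset_le_wtop2_wprev hmono hn hd0 hA; lia.
Qed.

Unset Implicit Arguments.
Set Strict Implicit.

Theorem corollary1p7 (k : fieldType) (n : nat) (d : 'I_n.+1 -> nat)
    (hn : (1 <= n)%N)
    (hd0 : (1 <= d ord0)%N)
    (hmono : forall i j : 'I_n.+1, (i <= j)%N -> (d i <= d j)%N)
    (IX : {mpoly k[n.+1]} -> Prop)
    (hhom : homogeneous_ideal d IX)
    (hprime : is_prime_ideal IX)
    (hsat : saturated IX)
    (r : int)
    (hreg : koszul_regularity_is d IX r) :
  generated_in_degrees_lt d IX (r + (wtop d 2)%:Z).
Proof.
have [hI h1 _] := hprime; have [_ hcomp] := hhom; have [hkr _] := hreg.
have dpos i : (0 < d i)%N := leq_trans hd0 (hmono ord0 i (leq0n i)).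
have hvan := koszul_regular_vanish hmono hn hd0 hkr.
move=> f hf; rewrite (wcomp_sum d f); apply: gen_lt_sum => e _.
exact: (gen_lt_whomog (e := e) hI dpos h1 hvan (hcomp _ _ hf) (whomog_wcomp d e f)).
Qed.
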